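(* For any $w, w' \in \mathcal{C}\langle A \rangle$ and any integer $M \ge 1$, \[ Z^{\mathcal{S}, \ast}_{q, M}(w \ast_{\hbar} w')=Z^{\mathcal{S}, \ast}_{q, M}(w)\, Z^{\mathcal{S}, \ast}_{q, M}(w'). \]
   Context: Let $\mathcal{C}=\mathbb{Q}[\hbar]$ with $\hbar$ a formal variable, and let $\mathfrak{H}=\mathcal{C}\langle a,b\rangle$ be the non-commutative polynomial ring in $a,b$ over $\mathcal{C}$. For $k\ge 1$ put $g_k=ba^k$. Let $A=\{\hbar b\}\cup\{ba^k\mid k\ge 1\}$, let $\mathcal{C}\langle A\rangle$ be the $\mathcal{C}$-subalgebra of $\mathfrak{H}$ generated by $1$ and $A$, and let $\mathfrak{z}$ be the $\mathcal{C}$-span of $A$. Fix $q\in\mathbb{C}$ with $0<|q|<1$ and regard $\mathbb{C}$ as a $\mathcal{C}$-module with $\hbar$ acting as multiplication by $1-q$. Let $[m]=(1-q^m)/(1-q)$. For $m\ge 1$ let $F_q(m;\cdot):\mathfrak{z}\to\mathbb{C}$ be the $\mathcal{C}$-linear map with $F_q(m;\hbar b)=1-q$ and $F_q(m;g_k)=q^{km}/[m]^k$ for $k\ge1$. For $M\ge 1$ let $Z_{q,M}:\mathcal{C}\langle A\rangle\to\mathbb{C}$ be the $\mathcal{C}$-linear map with $Z_{q,M}(1)=1$ and $Z_{q,M}(u_1\cdots u_r)=\sum_{0<m_1<\cdots<m_r<M}\prod_{i=1}^r F_q(m_i;u_i)$ for $u_1,\dots,u_r\in A$. Let $\circ_\hbar:\mathfrak{z}\times\mathfrak{z}\to\mathfrak{z}$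 be the symmetric $\mathcal{C}$-bilinear map with $(\hbar b)\circ_\hbar(\hbar b)=\hbar\cdot \hbar b$, $(\hbar b)\circ_\hbar g_k=\hbar g_k$, $g_k\circ_\hbar g_l=g_{k+l}$ ($k,l\ge1$). The harmonic product $\ast_\hbar$ on $\mathcal{C}\langle A\rangle$ is the $\mathcal{C}$-bilinear product determined by $w\ast_\hbar 1=1\ast_\hbar w=w$ and $(wu)\ast_\hbar(w'v)=(w\ast_\hbar w'v)u+(wu\ast_\hbar w')v+(w\ast_\hbar w')(u\circ_\hbar v)$ for $w,w'\in\mathcal{C}\langle A\rangle$, $u,v\in A$. Let $\psi^\ast$ be the $\mathcal{C}$-algebra anti-involution of $\mathcal{C}\langle A\rangle$ with $\psi^\ast(\hbar b)=\hbar b$ and $\psi^\ast(ba^k)=b(-a)^k$ for $k\ge1$. Define the $\mathcal{C}$-linear map $w^{\mathcal{S},\ast}_\hbar:\mathcal{C}\langle A\rangle\to\mathcal{C}\langle A\rangle$ by $w^{\mathcal{S},\ast}_\hbar(1)=1$ and $w^{\mathcal{S},\ast}_\hbar(u_1\cdots u_r)=\sum_{i=0}^r (u_1\cdots u_i)\ast_\hbar \psi^\ast(u_{i+1}\cdots u_r)$ for $r\ge1$, $u_1,\dots,u_r\in A$, and set $Z^{\mathcal{S},\ast}_{q,M}=Z_{q,M}\circ w^{\mathcal{S},\ast}_\hbar$. *)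

From mathcomp Require Import all_boot all_algebra.
From mathcomp Require Import reals complex.
Set Implicit Arguments.
Unset Strict Implicit.
Unset Printing Implicit Defensive.
Import GRing.Theory Num.Theory.
Local Open Scope ring_scope.

(* Coefficient ring  C = Q[hbar];  hbar is 'X. *)
Notation coef := {poly rat}.

(* Letters of the alphabet A:
     0      stands for  hbar b,
     k >= 1 stands for  g_k = b a^k.
   Distinct A-words give C-linearly independent elements of H (each is
   hbar^(#0-letters) times a distinct word in a,b), so C<A> is the free
   C-module on A-words; an element of C<A> is represented by a finite
   formal C-linear combination  sum_i c_i * w_i  (list of pairs). *)
Definition word := seq nat.
Definition elt := seq (coef * word).

(* u o_hbar v = circ_coef u v * (letter u + v):
   (hb)o(hb) = hbar*(hb), (hb)o g_k = hbar*g_k, g_k o g_l = g_(k+l). *)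
Definition circ_coef (u v : nat) : coef :=
  if (u == 0%N) || (v == 0%N) then 'X else 1.

(* Harmonic product of two words, computed on REVERSED words (head = last
   letter), returning reversed words:
   (w u) * (w' v) = (w * w' v) u + (w u * w') v + (w * w') (u o v). *)
Fixpoint hrev (s t : word) {struct s} : elt :=
  match s with
  | [::] => [:: (1, t)]
  | u :: s' =>
    let fix h2 (t : word) : elt :=
      match t with
      | [::] => [:: (1, s)]
      | v :: t' =>
          [seq (p.1, u :: p.2) | p <- hrev s' (v :: t')]
          ++ [seq (p.1, v :: p.2) | p <- h2 t']
          ++ [seq (p.1 * circ_coef u v, (u + v)%N :: p.2) | p <- hrev s' t']
      end in h2 t
  end.

Definition hword (s t : word) : elt :=
  [seq (p.1, rev p.2) | p <- hrev (rev s) (rev t)].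

Definition hprod (x y : elt) : elt :=
  flatten [seq [seq (a.1 * b.1 * p.1, p.2) | p <- hword a.2 b.2]
          | a <- x, b <- y].

(* psi^*: anti-involution, psi(hb) = hb, psi(b a^k) = b(-a)^k = (-1)^k b a^k;
   on a word: reverse and multiply by (-1)^(sum of letters). *)
Definition psi_word (s : word) : coef * word := ((-1) ^+ sumn s, rev s).

Definition wS_word (s : word) : elt :=
  flatten [seq [seq ((psi_word (drop i s)).1 * p.1, p.2)
               | p <- hword (take i s) (psi_word (drop i s)).2]
          | i <- iota 0 (size s).+1].

Definition wS (x : elt) : elt :=
  flatten [seq [seq (a.1 * p.1, p.2) | p <- wS_word a.2] | a <- x].

Section Zeta.
Variable R : realType.
Local Notation CC := (R[i]).

(* C-module structure on the complex numbers: hbar acts as 1 - q *)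
Definition hact (q : CC) (c : coef) : CC := (map_poly ratr c).[1 - q].

Definition qint (q : CC) (m : nat) : CC := (1 - q ^+ m) / (1 - q).

Definition Fq (q : CC) (m : nat) (u : nat) : CC :=
  if u == 0%N then 1 - q else q ^+ (u * m) / (qint q m) ^+ u.

(* Z_{q,M}(u_1...u_r) = sum_{0 < m_1 < ... < m_r < M} prod_i F_q(m_i; u_i) *)
Definition Zword (q : CC) (M : nat) (s : word) : CC :=
  \sum_(m : (size s).-tuple 'I_M | sorted ltn (0%N :: [seq val j | j <- m]))
     \prod_(i < size s) Fq q (tnth m i) (nth 0%N s i).

Definition Zq (q : CC) (M : nat) (x : elt) : CC :=
  \sum_(p <- x) hact q p.1 * Zword q M p.2.

Definition ZSq (q : CC) (M : nat) (x : elt) : CC := Zq q M (wS x).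
End Zeta.

From mathcomp Require Import all_boot all_algebra.
From mathcomp Require Import reals complex.
From mathcomp Require Import zify ring.
Set Implicit Arguments.
Unset Strict Implicit.
Unset Printing Implicit Defensive.
Import GRing.Theory Num.Theory.
Local Open Scope ring_scope.

(* Split the range 0 < k < 2M - 1 at M and reflect its upper part by
   k |-> 2M - 1 - k: the reflection reverses the order of the letters and the
   sign (-1)^u is that of psi^*, so Z^{S,*}_{q,M}(u_1 ... u_r) is the truncated
   nested sum  sum_{0 < k_1 < ... < k_r < 2M-1} prod_i H(k_i; u_i)  of the
   folded weight H(k; u) = F_q(k; u) for k < M and (-1)^u F_q(2M-1-k; u)
   otherwise.  Since F_q(k; u) F_q(k; v) = F_q(k; u o v), the same holds for H,
   and any nested sum with such a weight is a character of the harmonic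
   product: induct on the upper bound, peeling off the largest index. *)

Section NestedSums.
Variable K : comPzRingType.
Implicit Types (H : nat -> nat -> K) (w : word).

Fixpoint nested_sum H w (a b : nat) : K :=
  if w is u :: w' then \sum_(a <= k < b) H k u * nested_sum H w' k.+1 b else 1.

Fixpoint nested_sum_desc H w (a n : nat) : K :=
  if w is u :: w' then \sum_(a <= k < n) H k u * nested_sum_desc H w' a k else 1.

Lemma exchange_big_triangle (F : nat -> nat -> K) a n :
  \sum_(a <= j < n) \sum_(a <= i < j) F i j =
  \sum_(a <= i < n) \sum_(i.+1 <= j < n) F i j.
Proof.
elim: n => [|n IHn]; first by rewrite !big_geq.
have [a_le_n | n_lt_a] := leqP a n; last by rewrite !big_geq.
rewrite [LHS]big_nat_recr //= IHn [RHS]big_nat_recr //= [X in _ = _ + X]big_geq //.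
rewrite addr0 -big_split /=; apply: eq_big_nat => i /andP [_ i_lt_n].
by rewrite big_nat_recr.
Qed.

Lemma nested_sum_desc_rcons H w u a n :
  nested_sum_desc H (rcons w u) a n =
  \sum_(a <= k < n) H k u * nested_sum_desc H w k.+1 n.
Proof.
elim: w n => [|v w IHw] n //=.
under eq_bigr do rewrite IHw mulr_sumr.
rewrite exchange_big_triangle; apply: eq_bigr => i _; rewrite mulr_sumr.
by apply: eq_bigr => j _; rewrite mulrCA.
Qed.

Lemma nested_sum_desc_rev H w a n :
  nested_sum_desc H (rev w) a n = nested_sum H w a n.
Proof.
elim: w a => [|u w IHw] a //=.
by rewrite rev_cons nested_sum_desc_rcons; apply: eq_bigr => k _; rewrite IHw.
Qed.

Lemma nested_sum_descSn H u w a n :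
  nested_sum_desc H (u :: w) a n.+1 = nested_sum_desc H (u :: w) a n +
    (if (a <= n)%N then H n u * nested_sum_desc H w a n else 0).
Proof.
rewrite /=; case: leqP => [a_le_n | n_lt_a]; first by rewrite big_nat_recr.
by rewrite !big_geq // ?addr0 // ltnW.
Qed.

Lemma eq_nested_sum H H' w a b :
  (forall k u, (a <= k < b)%N -> H k u = H' k u) ->
  nested_sum H w a b = nested_sum H' w a b.
Proof.
elim: w a => [|u w IHw] a eqH //=.
apply: eq_big_nat => k /andP [a_le_k k_lt_b].
by rewrite eqH ?a_le_k // IHw // => j v /andP [? ?]; apply: eqH; lia.
Qed.

Lemma nested_sum_split H w a m b : (a <= m <= b)%N ->
  nested_sum H w a b =
  \sum_(0 <= i < (size w).+1) nested_sum H (take i w) a m * nested_sum H (drop i w) m b.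
Proof.
elim: w a => [|u w IHw] a /andP [a_le_m m_le_b]; first by rewrite big_nat1 mulr1.
rewrite big_nat_recl //= mul1r (big_cat_nat a_le_m m_le_b) /= addrC; congr (_ + _).
under eq_big_nat => k /andP [_ k_lt_m].
  rewrite (IHw k.+1) ?k_lt_m ?m_le_b // mulr_sumr.
over.
rewrite exchange_big /=; apply: eq_bigr => i _; rewrite mulr_suml.
by apply: eq_bigr => k _; rewrite mulrA.
Qed.

Lemma big_nat_reflect (F : nat -> K) a b c : (b <= c.+1)%N ->
  \sum_(a <= k < b) F (c - k)%N = \sum_(c.+1 - b <= j < c.+1 - a) F j.
Proof.
elim: b => [|b IHb] b_le; first by rewrite !big_geq // leq_subr.
have [a_le_b | b_lt_a] := leqP a b; last by rewrite !big_geq //; lia.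
rewrite big_nat_recr //= IHb; last lia.
rewrite (@big_ltn _ _ _ (c.+1 - b.+1)); last lia.
by rewrite [RHS]addrC subSS subSn.
Qed.

Lemma nested_sum_reflect H H' w a b c : (b <= c.+1)%N ->
  (forall k u, (a <= k < b)%N -> H k u = H' (c - k)%N u) ->
  nested_sum H w a b = nested_sum_desc H' w (c.+1 - b) (c.+1 - a).
Proof.
move=> b_le; elim: w a => [|u w IHw] a eqH //=.
rewrite -big_nat_reflect //; apply: eq_big_nat => k /andP [a_le_k k_lt_b].
rewrite eqH ?a_le_k // IHw; last by move=> j v /andP [? ?]; apply: eqH; lia.
by congr (_ * nested_sum_desc _ _ _ _); lia.
Qed.

Lemma nested_sum_desc_sign H w a n :
  nested_sum_desc (fun k u => (-1) ^+ u * H k u) w a n =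
  (-1) ^+ sumn w * nested_sum_desc H w a n.
Proof.
elim: w n => [|u w IHw] n /=; first by rewrite mul1r.
by rewrite mulr_sumr; apply: eq_bigr => k _; rewrite IHw exprD; ring.
Qed.

Lemma big_tuple_cons (T : finType) n (P : pred (n.+1.-tuple T))
    (F : n.+1.-tuple T -> K) :
  \sum_(t | P t) F t =
  \sum_(x : T) \sum_(t : n.-tuple T | P [tuple of x :: t]) F [tuple of x :: t].
Proof.
rewrite pair_big_dep (reindex (fun p : T * n.-tuple T => [tuple of p.1 :: p.2])) //=.
exists (fun t => (thead t, [tuple of behead t])) => [[x t] _ | t _] /=.
  by rewrite theadE; congr pair; apply: val_inj.
by rewrite -tuple_eta.
Qed.

Lemma nested_sum_tuples H M w c :
  \sum_(m : (size w).-tuple 'I_M | path ltn c [seq val j | j <- m])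
     \prod_(i < size w) H (tnth m i) (nth 0%N w i) = nested_sum H w c.+1 M.
Proof.
elim: w c => [|u w IHw] c /=.
  rewrite (big_pred1 [tuple]) ?big_ord0 // => m.
  by apply/idP/eqP => [_|->] //; apply: val_inj; case: m => [[]].
rewrite big_tuple_cons /= big_geq_mkord /= [RHS]big_mkcond /=.
apply: eq_bigr => k _; case: ltnP => [c_lt_k | k_le_c] /=; last by rewrite big_pred0.
rewrite -IHw mulr_sumr; apply: eq_bigr => t _.
by rewrite big_ord_recl; congr (_ * _); apply: eq_bigr => i _; rewrite !(tnth_nth k).
Qed.

End NestedSums.

Lemma hrev_cons u s v t : hrev (u :: s) (v :: t) =
  [seq (p.1, u :: p.2) | p <- hrev s (v :: t)]
  ++ [seq (p.1, v :: p.2) | p <- hrev (u :: s) t]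
  ++ [seq (p.1 * circ_coef u v, (u + v)%N :: p.2) | p <- hrev s t].
Proof. by []. Qed.

Section HarmonicCharacters.
Variables (K : comPzRingType) (h : coef -> K).
Hypothesis h1 : h 1 = 1.
Hypothesis hM : {morph h : a b / a * b}.

Definition lin_ext (chi : word -> K) (x : elt) : K := \sum_(p <- x) h p.1 * chi p.2.

Definition circ_multiplicative (H : nat -> nat -> K) :=
  forall k u v, H k u * H k v = h (circ_coef u v) * H k (u + v)%N.

Lemma lin_ext_hprod (chi : word -> K) :
  (forall s t, lin_ext chi (hword s t) = chi s * chi t) ->
  forall x y, lin_ext chi (hprod x y) = lin_ext chi x * lin_ext chi y.
Proof.
move=> chi_hword x y; rewrite /lin_ext /hprod !big_flatten /= big_map mulr_suml.
apply: eq_bigr => a _; rewrite big_map mulr_sumr; apply: eq_bigr => b _.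
rewrite big_map (eq_bigr (fun p => h a.1 * h b.1 * (h p.1 * chi p.2))) /=.
  by rewrite -mulr_sumr -[\sum_(p <- _) _]/(lin_ext chi _) chi_hword mulrACA.
by move=> p _; rewrite !hM mulrA.
Qed.

Lemma lin_ext_wS (chi : word -> K) x :
  lin_ext chi (wS x) = lin_ext (fun s => lin_ext chi (wS_word s)) x.
Proof.
rewrite /lin_ext /wS big_flatten big_map; apply: eq_bigr => a _.
by rewrite big_map mulr_sumr; apply: eq_bigr => p _; rewrite hM mulrA.
Qed.

Lemma lin_ext_word1 (chi : word -> K) w : lin_ext chi [:: (1, w)] = chi w.
Proof. by rewrite /lin_ext big_seq1 h1 mul1r. Qed.

Lemma lin_ext_hword (chi : word -> K) s t :
  lin_ext chi (hword s t) = lin_ext (fun w => chi (rev w)) (hrev (rev s) (rev t)).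
Proof. by rewrite /lin_ext big_map. Qed.

Lemma lin_ext_hrev_cons (chi : word -> K) u s v t :
  lin_ext chi (hrev (u :: s) (v :: t)) =
  lin_ext (fun w => chi (u :: w)) (hrev s (v :: t)) +
  lin_ext (fun w => chi (v :: w)) (hrev (u :: s) t) +
  h (circ_coef u v) * lin_ext (fun w => chi ((u + v)%N :: w)) (hrev s t).
Proof.
rewrite /lin_ext hrev_cons !big_cat !big_map /= mulr_sumr addrA; congr (_ + _).
by apply: eq_bigr => p _; rewrite hM mulrCA mulrA.
Qed.

Lemma hrev_stuffle (Phi : word -> nat -> K) (G : nat -> nat -> K) :
  (forall n, Phi [::] n = 1) ->
  (forall u w, Phi (u :: w) 0%N = 0) ->
  (forall u w n, Phi (u :: w) n.+1 = Phi (u :: w) n + G n u * Phi w n) ->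
  circ_multiplicative G ->
  forall n x y, lin_ext (Phi^~ n) (hrev x y) = Phi x n * Phi y n.
Proof.
move=> Phi_nil Phi0 PhiS GM; elim=> [|n IHn] [|u s] [|v t];
  rewrite ?lin_ext_word1 ?Phi_nil ?mul1r ?mulr1 //.
  by rewrite lin_ext_hrev_cons Phi0 mul0r /lin_ext !big1 ?mulr0 ?addr0 // => p _;
    rewrite Phi0 mulr0.
have lin_ext_PhiS x (L : elt) : lin_ext (fun w => Phi (x :: w) n.+1) L =
    lin_ext (fun w => Phi (x :: w) n) L + G n x * lin_ext (Phi^~ n) L.
  by rewrite /lin_ext mulr_sumr -big_split /=; apply: eq_bigr => p _; rewrite PhiS; ring.
have IHuv := IHn (u :: s) (v :: t); rewrite lin_ext_hrev_cons in IHuv.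
rewrite lin_ext_hrev_cons !lin_ext_PhiS !IHn !PhiS.
rewrite mulrDl !mulrDr -IHuv mulrACA GM; ring.
Qed.

Lemma nested_sum_desc_stuffle H : circ_multiplicative H ->
  forall a n x y, lin_ext (fun w => nested_sum_desc H w a n) (hrev x y) =
                  nested_sum_desc H x a n * nested_sum_desc H y a n.
Proof.
move=> HM a.
apply: (hrev_stuffle (Phi := fun w n => nested_sum_desc H w a n)
                     (G := fun k u => if (a <= k)%N then H k u else 0)).
- by [].
- by move=> u w; rewrite /= big_geq.
- by move=> u w n; rewrite nested_sum_descSn; case: ifP; rewrite ?mul0r.
- by move=> k u v; case: ifP; rewrite ?HM ?mulr0.
Qed.

Lemma nested_sum_stuffle H : circ_multiplicative H ->
  forall a b s t, lin_ext (fun w => nested_sum H w a b) (hword s t) =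
                  nested_sum H s a b * nested_sum H t a b.
Proof.
move=> HM a b s t; rewrite lin_ext_hword -[nested_sum H s a b]nested_sum_desc_rev.
rewrite -[nested_sum H t a b]nested_sum_desc_rev -nested_sum_desc_stuffle //.
by apply: eq_bigr => p _; rewrite -nested_sum_desc_rev revK.
Qed.

End HarmonicCharacters.

Section QWeights.
Variables (R : realType) (q : R[i]).

Lemma hact1 : hact q 1 = 1.
Proof. by rewrite /hact rmorph1 hornerC. Qed.

Lemma hactM : {morph hact q : a b / a * b}.
Proof. by move=> a b; rewrite /hact rmorphM hornerM. Qed.

Lemma hactX : hact q 'X = 1 - q.
Proof. by rewrite /hact map_polyX hornerX. Qed.

Lemma hact_sign n : hact q ((-1) ^+ n) = (-1) ^+ n.
Proof. by rewrite /hact rmorphXn rmorphN1 !hornerE. Qed.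

Lemma Fq_circ_multiplicative : circ_multiplicative (hact q) (Fq q).
Proof.
move=> k [|u] [|v]; rewrite /Fq /circ_coef /= ?hactX ?hact1 ?addn0 //.
- by rewrite mulrC.
- by rewrite mul1r mulnDl !exprD invfM mulrACA.
Qed.

Lemma Zword_nested_sum M s : Zword q M s = nested_sum (Fq q) s 1 M.
Proof. exact: nested_sum_tuples. Qed.

Definition Fq_fold (M k u : nat) : R[i] :=
  if (k < M)%N then Fq q k u else (-1) ^+ u * Fq q ((M + M).-1 - k) u.

Lemma Fq_fold_circ_multiplicative M : circ_multiplicative (hact q) (Fq_fold M).
Proof.
move=> k u v; rewrite /Fq_fold; case: ifP => _; first exact: Fq_circ_multiplicative.
by rewrite mulrACA Fq_circ_multiplicative -exprD mulrCA.
Qed.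

Lemma nested_sum_Fq_fold_low M w :
  nested_sum (Fq_fold M) w 1 M = nested_sum (Fq q) w 1 M.
Proof. by apply: eq_nested_sum => k u /andP [_ k_lt_M]; rewrite /Fq_fold k_lt_M. Qed.

Lemma nested_sum_Fq_fold_high M w : (1 <= M)%N ->
  nested_sum (Fq_fold M) w M (M + M).-1 =
  (-1) ^+ sumn w * nested_sum (Fq q) (rev w) 1 M.
Proof.
move=> M_gt0.
rewrite (@nested_sum_reflect _ _ (fun k u => (-1) ^+ u * Fq q k u) _ _ _ (M + M).-1).
- have -> : ((M + M).-1.+1 - (M + M).-1 = 1)%N by lia.
  have -> : ((M + M).-1.+1 - M = M)%N by lia.
  by rewrite nested_sum_desc_sign -nested_sum_desc_rev revK.
- lia.
- by move=> k u /andP [M_le_k _]; rewrite /Fq_fold ltnNge M_le_k.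
Qed.

Lemma Zq_wS_word M s : (1 <= M)%N ->
  Zq q M (wS_word s) = nested_sum (Fq_fold M) s 1 (M + M).-1.
Proof.
move=> M_gt0; rewrite (@nested_sum_split _ _ _ 1 M); last lia.
rewrite /Zq /wS_word big_flatten big_map /index_iota subn0; apply: eq_bigr => i _.
rewrite nested_sum_Fq_fold_low nested_sum_Fq_fold_high //.
rewrite big_map (eq_bigr (fun p => (-1) ^+ sumn (drop i s) *
    (hact q p.1 * nested_sum (Fq q) p.2 1 M))) => [|p _]; last first.
  by rewrite hactM hact_sign Zword_nested_sum mulrA.
rewrite -mulr_sumr.
rewrite -[\sum_(p <- _) _]/(lin_ext (hact q) (fun w => nested_sum (Fq q) w 1 M) _).
by rewrite (nested_sum_stuffle hact1 hactM Fq_circ_multiplicative) mulrCA.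
Qed.

End QWeights.

Theorem proposition4p1 (R : realType) (q : R[i]) :
  0 < `|q| < 1 ->
  forall (w w' : elt) (M : nat), (1 <= M)%N ->
    ZSq q M (hprod w w') = ZSq q M w * ZSq q M w'.
Proof.
(* The identity is between finite sums. *)
move=> _ w w' M M_gt0.
pose chi s := nested_sum (Fq_fold q M) s 1 (M + M).-1.
have ZSq_lin_ext x : ZSq q M x = lin_ext (hact q) chi x.
  rewrite /ZSq -[Zq q M _]/(lin_ext (hact q) (Zword q M) _) (lin_ext_wS (hactM q)).
  by apply: eq_bigr => p _; rewrite /chi -Zq_wS_word.
rewrite !ZSq_lin_ext; apply: (lin_ext_hprod (hactM q)).
exact: (nested_sum_stuffle (hact1 q) (hactM q) (Fq_fold_circ_multiplicative q M)).
Qed.
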